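(* Let $n,m\ge 2$ be integers and $P_n,P_m$ paths on $n$ and $m$ vertices. Then $AT(P_n+_Q P_m)=2$ if $n=m=2$, and $AT(P_n+_Q P_m)=3$ otherwise.
   Context: For an orientation $D$, a subdigraph is Eulerian if every vertex has equal in- and outdegree in it; $D$ is an AT-orientation if the numbers of Eulerian subgraphs with an even and with an odd number of arcs differ; $AT(G)$ is the smallest $k$ such that $G$ has an AT-orientation of maximum outdegree at most $k-1$. $Q(G)$ has vertex set $V(G)\cup E(G)$: it is $S(G)$ (each edge $e=xy$ replaced by the path $x\,e\,y$) plus edges $ee'$ whenever edges $e,e'$ are adjacent in $G$. $G+_Q H$ has vertex set $(V(G)\cup E(G))\times V(H)$, with $(u_1,u_2)\sim(v_1,v_2)$ iff [$u_1=v_1\in V(G)$ and $u_2v_2\in E(H)$] or [$u_2=v_2$ and $u_1v_1\in E(Q(G))$]. *)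

From mathcomp Require Import all_boot.
Set Implicit Arguments. Unset Strict Implicit. Unset Printing Implicit Defensive.

Section Defs.

Definition is_orientation (V : finType) (adj : rel V) (D : {set V * V}) : Prop :=
  (forall x y, (x, y) \in D -> adj x y) /\
  (forall x y, adj x y -> ((x, y) \in D) != ((y, x) \in D)).

Definition eulerian_sub (V : finType) (D A : {set V * V}) : bool :=
  (A \subset D) &&
  [forall v, #|[set a in A | a.1 == v]| == #|[set a in A | a.2 == v]|].

Definition AT_orientation (V : finType) (D : {set V * V}) : bool :=
  #|[pred A : {set V * V} | eulerian_sub D A & ~~ odd #|A| ]|
  != #|[pred A : {set V * V} | eulerian_sub D A & odd #|A| ]|.

Definition outdeg (V : finType) (D : {set V * V}) (x : V) : nat :=
  #|[set y | (x, y) \in D]|.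

Definition has_AT_orientation (V : finType) (adj : rel V) (k : nat) : Prop :=
  exists D : {set V * V},
    is_orientation adj D /\ AT_orientation D /\ forall x, outdeg D x < k.

Definition AT_number (V : finType) (adj : rel V) (k : nat) : Prop :=
  has_AT_orientation adj k /\ forall j, j < k -> ~ has_AT_orientation adj j.

Definition is_edge (T : finType) (e : rel T) (A : {set T}) : bool :=
  [exists x, exists y, e x y && (A == [set x; y])].

Definition edgeT (T : finType) (e : rel T) := {A : {set T} | is_edge e A}.

(** Q(G): vertices V(G) + E(G); S(G) edges x--e for x in e, plus e--e'
    for distinct adjacent edges. *)
Definition Qadj (T : finType) (e : rel T) : rel (T + edgeT e) :=
  fun u v =>
    match u, v with
    | inl x, inr f => x \in val f
    | inr f, inl x => x \in val f
    | inr f, inr f' => (f != f') && (val f :&: val f' != set0)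
    | inl _, inl _ => false
    end.

Definition Qprod (T : finType) (e : rel T) (T' : finType) (e' : rel T')
  : rel ((T + edgeT e) * T') :=
  fun u v =>
    (match u.1, v.1 with
     | inl x, inl y => (x == y) && e' u.2 v.2
     | _, _ => false
     end)
    || ((u.2 == v.2) && Qadj u.1 v.1).

Definition Ppath (n : nat) : rel 'I_n :=
  fun i j => (i.+1 == j :> nat) || (j.+1 == i :> nat).

End Defs.

Arguments Ppath n : clear implicits.
Arguments Qprod {T} e {T'} e'.
Arguments Qadj {T} e.

From mathcomp Require Import all_boot zify.
Set Implicit Arguments. Unset Strict Implicit. Unset Printing Implicit Defensive.

(* If D orients a graph with every outdegree below k, the degree sum, which counts
   every arc twice, is at most 2(k-1)|V|.  P_n +_Q P_m has minimum degree 2 and, unless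
   n = m = 2, a vertex of degree 3, so it has no orientation with outdegrees below 1
   (resp. 2).  Conversely, ordering the vertices (x, v) by the position of x along the
   subdivided path S(P_n) and then by v gives an acyclic orientation of outdegree at
   most 2, and an acyclic digraph has only the empty Eulerian subgraph.  For n = m = 2
   the graph is a hexagon, whose cyclic orientation has exactly two Eulerian subgraphs,
   of sizes 0 and 6. *)

Lemma card_set_in_eq (T : finType) (A : {set T}) c : #|[set a in A | a == c]| = (c \in A).
Proof.
case: (boolP (c \in A)) => cA /=; [rewrite -(cards1 c) | rewrite -(cards0 T)];
  apply: eq_card => a; rewrite !inE; case: eqP => [->|]; rewrite ?andbT ?andbF //.
by rewrite (negbTE cA).
Qed.

Lemma card_set_sum (T : finType) (P : pred T) : #|[set y | P y]| = \sum_y P y.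
Proof. by rewrite -sum1dep_card big_mkcond. Qed.

Lemma card_le2_injective (T : finType) (r : T -> nat) (A : {set T}) a b :
  injective r -> {in A, forall y, r y = a \/ r y = b} -> #|A| <= 2.
Proof.
move=> r_inj rA; have fibre_le1 c : #|[set y | r y == c]| <= 1.
  by apply/card_le1_eqP => y z; rewrite !inE => /eqP <- /eqP /r_inj.
apply: leq_trans (leq_add (fibre_le1 a) (fibre_le1 b)).
rewrite -cardsUI; apply/(leq_trans _ (leq_addr _ _))/subset_leq_card.
by apply/subsetP => y /rA; rewrite !inE => -[] ->; rewrite eqxx ?orbT.
Qed.

Section Orientations.

Variable V : finType.
Implicit Types (adj : rel V) (D A : {set V * V}).

Definition deg adj x := #|[set y | adj x y]|.
Definition indeg D x := #|[set y | (y, x) \in D]|.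

Lemma eulerian_sub0 D : eulerian_sub D set0.
Proof.
rewrite /eulerian_sub sub0set; apply/forallP => v.
by apply/eqP; rewrite !eq_card0 // => a; rewrite !inE.
Qed.

Lemma AT_orientation_even D :
  (forall A, eulerian_sub D A -> ~~ odd #|A|) -> AT_orientation D.
Proof.
move=> even_eul; rewrite /AT_orientation.
have -> : #|[pred A : {set V * V} | eulerian_sub D A & odd #|A|]| = 0.
  by apply: eq_card0 => A; rewrite !inE; apply/negP => /andP[/even_eul/negbTE ->].
by rewrite -lt0n; apply/card_gt0P; exists set0; rewrite !inE eulerian_sub0 cards0.
Qed.

(* Balance at the tail of an arc of A with lowest tail gives an arc of A into it,
   whose tail is lower still. *)
Lemma eulerian_sub_increasing (r : V -> nat) D A :
  {in D, forall a, r a.1 < r a.2} -> eulerian_sub D A -> A = set0.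
Proof.
move=> incr /andP[AD /forallP balanced]; case: (set_0Vmem A) => [//|[a0 a0A]].
case: (arg_minnP (fun a => r a.1) a0A) => a aA amin.
have : 0 < #|[set b in A | b.2 == a.1]|.
  by rewrite -(eqP (balanced a.1)); apply/card_gt0P; exists a; rewrite inE eqxx andbT.
case/card_gt0P => b; rewrite inE => /andP[bA /eqP ba].
have := amin b bA; have := incr b (subsetP AD b bA); rewrite ba; lia.
Qed.

Definition rank_orientation adj (r : V -> nat) : {set V * V} :=
  [set a | adj a.1 a.2 && (r a.1 < r a.2)].

Lemma rank_orientationP adj r : symmetric adj -> irreflexive adj -> injective r ->
  is_orientation adj (rank_orientation adj r).
Proof.
move=> adj_sym adj_irr r_inj; split=> x y; rewrite !inE /=; first by case/andP.
move=> xy; rewrite [adj y x]adj_sym xy /=.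
have : r x != r y by rewrite (inj_eq r_inj); apply: contraTneq xy => ->; rewrite adj_irr.
by case: ltngtP.
Qed.

Lemma AT_rank_orientation adj r : AT_orientation (rank_orientation adj r).
Proof.
apply: AT_orientation_even => A eulA.
rewrite (@eulerian_sub_increasing r _ _ _ eulA) ?cards0 //.
by move=> a; rewrite inE => /andP[].
Qed.

Definition successor_orientation (s : V -> V) : {set V * V} := [set a | a.2 == s a.1].

Lemma successor_orientationP adj s :
  (forall x y, adj x y = (y == s x) || (x == s y)) -> (forall x, s (s x) != x) ->
  is_orientation adj (successor_orientation s).
Proof.
move=> adjE no_2cycle; split=> x y; rewrite !inE /= adjE; first by move=> ->.
by case: eqP => [-> _ | _ /= ->]; rewrite // [x == _]eq_sym (negbTE (no_2cycle x)).
Qed.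

Lemma outdeg_successor_orientation s x : outdeg (successor_orientation s) x = 1.
Proof. by rewrite -(cards1 (s x)); apply: eq_card => y; rewrite !inE. Qed.

Lemma card_successor_orientation s : #|successor_orientation s| = #|V|.
Proof.
rewrite -(card_imset _ (_ : injective (fun x => (x, s x)))); last by move=> x y [].
apply: eq_card => -[x y]; rewrite inE /=.
by apply/eqP/imsetP => [-> | [z _ [-> ->]]]; first exists x.
Qed.

Section SuccessorCycle.

Variables (s : V -> V) (x0 : V).
Hypotheses (s_inj : injective s) (s_orbit : forall x, exists k, x = iter k s x0).
Let D := successor_orientation s.

Lemma card_arcs_from A y :
  A \subset D -> #|[set a in A | a.1 == y]| = ((y, s y) \in A).
Proof.
move=> AD; rewrite -card_set_in_eq; apply: eq_card => -[x z]; rewrite !inE /=.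
case: (boolP ((x, z) \in A)) => //= xzA.
move: (subsetP AD _ xzA); rewrite inE /= => /eqP ->.
by rewrite xpair_eqE; case: eqP => [->|]; rewrite ?eqxx.
Qed.

Lemma card_arcs_into A y :
  A \subset D -> #|[set a in A | a.2 == s y]| = ((y, s y) \in A).
Proof.
move=> AD; rewrite -card_set_in_eq; apply: eq_card => -[x z]; rewrite !inE /=.
case: (boolP ((x, z) \in A)) => //= xzA.
move: (subsetP AD _ xzA); rewrite inE /= => /eqP ->.
by rewrite xpair_eqE (inj_eq s_inj) andbb.
Qed.

(* Balance at [s x] forces the arcs into and out of [s x] to be chosen together,
   and the arcs of D form a single cycle. *)
Lemma eulerian_sub_successor_cycle A : eulerian_sub D A -> A = set0 \/ A = D.
Proof.
move=> /andP[AD /forallP balanced].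
have step x : ((s x, s (s x)) \in A) = ((x, s x) \in A).
  move: (balanced (s x)); rewrite card_arcs_from // card_arcs_into //.
  by do 2 case: (_ \in A).
have memA a : a \in D -> (a \in A) = ((x0, s x0) \in A).
  case: a => x y; rewrite inE /= => /eqP ->; case: (s_orbit x) => k ->.
  by elim: k => [//|k IH]; rewrite iterS step.
case: (boolP ((x0, s x0) \in A)) => x0A; [right | left]; apply/eqP.
  by rewrite eqEsubset AD; apply/subsetP => a aD; rewrite memA.
by rewrite -subset0; apply/subsetP => a aA; move: x0A; rewrite -(memA a) ?aA ?(subsetP AD).
Qed.

Lemma AT_successor_cycle : ~~ odd #|V| -> AT_orientation D.
Proof.
move=> V_even; apply: AT_orientation_even => A /eulerian_sub_successor_cycle [] ->.
  by rewrite cards0.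
by rewrite card_successor_orientation.
Qed.

End SuccessorCycle.

Lemma sum_indeg D : \sum_x indeg D x = \sum_x outdeg D x.
Proof.
rewrite /indeg /outdeg; under eq_bigr do rewrite card_set_sum.
by rewrite exchange_big; apply: eq_bigr => x _; rewrite card_set_sum.
Qed.

Lemma deg_le_outdeg_indeg adj D x :
  is_orientation adj D -> deg adj x <= outdeg D x + indeg D x.
Proof.
move=> [_ oriented]; rewrite -cardsUI; apply: leq_trans (leq_addr _ _).
apply/subset_leq_card/subsetP => y; rewrite !inE => /oriented.
by case: ((x, y) \in D); case: ((y, x) \in D).
Qed.

Lemma sum_deg_le adj D k : is_orientation adj D -> (forall x, outdeg D x < k) ->
  \sum_x deg adj x <= k.-1 * 2 * #|V|.
Proof.
move=> orD out_lt; apply: leq_trans (_ : \sum_x (outdeg D x + indeg D x) <= _).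
  by apply: leq_sum => x _; exact: deg_le_outdeg_indeg.
rewrite big_split /= sum_indeg addnn -mul2n [_ * 2]mulnC -mulnA leq_mul2l /=.
rewrite mulnC -sum_nat_const.
by apply: leq_sum => x _; have := out_lt x; lia.
Qed.

Lemma sum_deg_gt adj : (forall x, 2 <= deg adj x) -> (exists x, 3 <= deg adj x) ->
  2 * #|V| < \sum_x deg adj x.
Proof.
move=> deg_ge2 [x0 deg_x0]; rewrite mulnC -sum_nat_const.
rewrite (bigD1 x0) //= [X in _ < X](bigD1 x0) //=.
by rewrite -addSn leq_add //; apply: leq_sum.
Qed.

Lemma AT_numberP adj k : has_AT_orientation adj k ->
  k.-2 * 2 * #|V| < \sum_x deg adj x -> AT_number adj k.
Proof.
move=> hk sum_gt; split=> // j jk [D [orD [_ out_lt]]].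
have := leq_trans sum_gt (sum_deg_le orD out_lt).
by rewrite ltn_mul2r ltn_mul2r; lia.
Qed.

End Orientations.

Section QProduct.

Variables (T : finType) (e : rel T) (T' : finType) (e' : rel T').

Lemma Qadj_sym : symmetric (Qadj e).
Proof. by case=> [x|f] [y|g] //=; rewrite eq_sym setIC. Qed.

Lemma Qprod_sym : symmetric e' -> symmetric (Qprod e e').
Proof.
move=> e'_sym [a v] [b w]; rewrite /Qprod /= Qadj_sym [w == v]eq_sym e'_sym.
by case: a b => [x|f] [y|g] //; rewrite eq_sym.
Qed.

Lemma Qprod_irr : irreflexive e' -> irreflexive (Qprod e e').
Proof. by move=> e'_irr [[x|f] v]; rewrite /Qprod /= ?e'_irr ?eqxx ?andbF. Qed.

End QProduct.

Lemma Ppath_sym n : symmetric (Ppath n).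
Proof. by move=> i j; rewrite /Ppath orbC. Qed.

Lemma Ppath_irr n : irreflexive (Ppath n).
Proof. by move=> i; apply/negbTE; rewrite /Ppath; lia. Qed.

Lemma path_edgeP n (f : edgeT (Ppath n)) :
  exists x y : 'I_n, x.+1 = y /\ val f = [set x; y].
Proof.
case: f => A /= /existsP[x /existsP[y /andP[/orP[] /eqP xy /eqP ->]]].
  by exists x, y.
by exists y, x; rewrite setUC.
Qed.

Lemma path_edge_is n (x y : 'I_n) : x.+1 == y -> is_edge (Ppath n) [set x; y].
Proof.
by move=> xy; apply/existsP; exists x; apply/existsP; exists y; rewrite /Ppath xy eqxx.
Qed.

Definition path_edge n (x y : 'I_n) (xy : x.+1 == y) : edgeT (Ppath n) :=
  exist _ [set x; y] (path_edge_is xy).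

(* Vertex [i] of [P_n] gets stage [2i] and the edge [{x, x+1}] stage [2x+1]:
   the stage enumerates the subdivided path [S(P_n)] in order. *)
Definition stage n (u : 'I_n + edgeT (Ppath n)) : nat :=
  match u with inl i => i.*2 | inr f => \sum_(z in val f) z end.

Lemma stage_path_edge n (f : edgeT (Ppath n)) (x y : 'I_n) :
  x.+1 = y -> val f = [set x; y] -> stage (inr f) = x.*2.+1.
Proof.
move=> xy fE; rewrite /= fE big_setU1 /= ?big_set1 ?inE; first lia.
by apply/eqP => /(congr1 val) /=; lia.
Qed.

Lemma stage_inj n : injective (@stage n).
Proof.
have edge_stage (f : edgeT (Ppath n)) : exists2 x : 'I_n,
    stage (inr f) = x.*2.+1 & forall g, stage (inr g) = x.*2.+1 -> g = f.
  case: (path_edgeP f) => x [y [xy fE]]; exists x; first exact: stage_path_edge fE.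
  move=> g; case: (path_edgeP g) => x' [y' [xy' gE]].
  rewrite (stage_path_edge xy' gE) => sxx'.
  have ex : x' = x by apply: ord_inj; lia.
  have ey : y' = y by apply: ord_inj; lia.
  by apply: val_inj; rewrite fE gE ex ey.
case=> [i|f] [j|g].
- by move=> /= ij; congr inl; apply: ord_inj; lia.
- by case: (edge_stage g) => x -> _ /=; lia.
- by case: (edge_stage f) => x -> _ /=; lia.
- by case: (edge_stage f) => x -> fE /esym/fE ->.
Qed.

Lemma Qadj_stage_inl n i b : Qadj (Ppath n) (inl i) b -> stage (inl i) < stage b ->
  stage b = i.*2.+1.
Proof.
case: b => [//|g]; case: (path_edgeP g) => x [y [xy gE]].
by rewrite (stage_path_edge xy gE) /= gE !inE -!val_eqE /=; lia.
Qed.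

Lemma Qadj_stage_le n a b : Qadj (Ppath n) a b -> stage a < stage b ->
  stage b <= (stage a).+2.
Proof.
case: a => [i|f] ab lt_ab; first by rewrite (Qadj_stage_inl ab lt_ab).
case: (path_edgeP f) => x [y [xy fE]]; move: ab lt_ab; rewrite (stage_path_edge xy fE).
case: b => [j|g]; first by rewrite /= fE !inE -!val_eqE /=; lia.
case: (path_edgeP g) => x' [y' [xy' gE]]; rewrite (stage_path_edge xy' gE) /=.
by case/andP=> _ /set0Pn[z]; rewrite fE gE !inE -!val_eqE /=; lia.
Qed.

Lemma path_neighbour n (i : 'I_n) : 1 < n -> exists j, Ppath n i j.
Proof.
move=> n_gt1; case: (ltnP i.+1 n) => [lt_in | le_ni].
  by exists (Ordinal lt_in); rewrite /Ppath eqxx.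
have lt_pn : i.-1 < n by apply: leq_ltn_trans (leq_pred _) (ltn_ord i).
by exists (Ordinal lt_pn); rewrite /Ppath /=; lia.
Qed.

Lemma path_edge_at n (i : 'I_n) : 1 < n -> exists f : edgeT (Ppath n), i \in val f.
Proof.
move=> /(path_neighbour i) [j /orP[] ij].
  by exists (path_edge ij); rewrite !inE eqxx.
by exists (path_edge ij); rewrite !inE eqxx orbT.
Qed.

Section PathProduct.

Variables n m : nat.
Local Notation vertex := (('I_n + edgeT (Ppath n)) * 'I_m)%type.
Local Notation G := (Qprod (Ppath n) (Ppath m)).

Definition Qrank (u : vertex) : nat := stage u.1 * m + u.2.

Lemma Qrank_inj : injective Qrank.
Proof.
move=> [a v] [b w]; rewrite /Qrank /= => eq_rank.
have m_gt0 : 0 < m by apply: leq_ltn_trans (ltn_ord v).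
have evw : v = w :> nat.
  by move: (congr1 (modn^~ m) eq_rank); rewrite !modnMDl !modn_small.
have eab : stage a = stage b.
  by move: (congr1 (divn^~ m) eq_rank); rewrite !divnMDl // !divn_small // !addn0.
by rewrite (stage_inj eab) (val_inj evw).
Qed.

Lemma Qrank_later x y : G x y -> Qrank x < Qrank y ->
  Qrank y = Qrank x + m \/ Qrank y = Qrank x + (if x.1 is inl _ then 1 else m.*2).
Proof.
case: x y => [a v] [b w]; rewrite /Qrank /Qprod /=.
have m_gt0 : 0 < m by apply: leq_ltn_trans (ltn_ord v).
case/orP=> [|/andP[/eqP -> ab]].
  case: a b => [i|f] [j|g] //= /andP[/eqP <- vw]; rewrite ltn_add2l; right.
  by move: vw; rewrite /Ppath; lia.
rewrite ltn_add2r ltn_pmul2r // => lt_ab.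
have : stage b = (stage a).+1 \/
       stage b = (stage a).+2 /\ (if a is inr _ then true else false).
  case: a ab lt_ab => [i|f] ab lt_ab; first by left; rewrite (Qadj_stage_inl ab lt_ab).
  by have := Qadj_stage_le ab lt_ab; lia.
case=> [-> | [-> a_edge]]; rewrite !mulSn; first by left; lia.
by case: a a_edge {ab lt_ab} => // f _; right; lia.
Qed.

Lemma has_AT_orientation_Qpath : has_AT_orientation G 3.
Proof.
exists (rank_orientation G Qrank); split.
  apply: rank_orientationP Qrank_inj; [exact/Qprod_sym/Ppath_sym | exact/Qprod_irr/Ppath_irr].
split; first exact: AT_rank_orientation.
move=> x; rewrite ltnS /outdeg; apply: (card_le2_injective Qrank_inj) => y.
by rewrite !inE /= => /andP[]; exact: Qrank_later.
Qed.

Hypotheses (n_gt1 : 1 < n) (m_gt1 : 1 < m).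

Lemma Qprod_deg_ge2 x : 2 <= deg G x.
Proof.
apply/card_gt1P; case: x => [[i|f] v].
  case: (path_edge_at i n_gt1) => f iF; case: (path_neighbour v m_gt1) => w vw.
  by exists (inr f, v), (inl i, w); rewrite !inE /Qprod /= iF vw !eqxx.
case: (path_edgeP f) => x [y [xy fE]]; exists (inl x, v), (inl y, v).
rewrite !inE /Qprod /= fE !inE !eqxx ?orbT; split=> //.
by apply/eqP => -[] /(congr1 val) /=; lia.
Qed.

Lemma Qprod_deg_ge3 : ~~ ((n == 2) && (m == 2)) -> exists x, 3 <= deg G x.
Proof.
move=> not22; pose i0 := Ordinal (ltnW n_gt1); pose i1 := Ordinal n_gt1.
pose f01 := path_edge (isT : i0.+1 == i1).
case: (ltnP 2 n) => [n_gt2 | n_le2].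
  pose f12 := path_edge (isT : i1.+1 == Ordinal n_gt2).
  pose v0 := Ordinal (ltnW m_gt1).
  exists (inr f01, v0); apply/card_gt2P; exists (inl i0, v0), (inl i1, v0), (inr f12, v0).
  rewrite !inE /Qprod /= !inE !eqxx /= ?orbT; split=> //; split=> //.
  apply/andP; split; last by apply/set0Pn; exists i1; rewrite !inE eqxx orbT.
  by apply/negP => /eqP/(congr1 val)/setP/(_ i0); rewrite !inE.
have m_gt2 : 2 < m by move: not22 n_le2 n_gt1; lia.
pose v0 := Ordinal (ltnW m_gt1); pose v1 := Ordinal m_gt1; pose v2 := Ordinal m_gt2.
exists (inl i0, v1); apply/card_gt2P; exists (inl i0, v0), (inl i0, v2), (inr f01, v1).
by rewrite !inE /Qprod /Ppath /= !inE !eqxx.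
Qed.

End PathProduct.

Section P2P2.

Local Notation vertex := (('I_2 + edgeT (Ppath 2)) * 'I_2)%type.
Local Notation G := (Qprod (Ppath 2) (Ppath 2)).

Definition P2_edge : edgeT (Ppath 2) := @path_edge 2 ord0 ord_max isT.

Lemma P2_edgeE (f : edgeT (Ppath 2)) : f = P2_edge.
Proof.
case: (path_edgeP f) => x [y [xy fE]]; apply: val_inj; rewrite fE /=.
have lt_y2 := ltn_ord y.
by congr [set _; _]; apply: ord_inj; rewrite /= -?xy; lia.
Qed.

Lemma ord2P (i : 'I_2) : i = ord0 \/ i = ord_max.
Proof. by case: i => [[|[|//]]] lt_i2; [left | right]; apply: ord_inj. Qed.

Lemma vertex22_ind (P : vertex -> Prop) :
  P (inl ord0, ord0) -> P (inl ord0, ord_max) -> P (inl ord_max, ord0) ->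
  P (inl ord_max, ord_max) -> P (inr P2_edge, ord0) -> P (inr P2_edge, ord_max) ->
  forall x, P x.
Proof.
move=> P00 P01 P10 P11 Pe0 Pe1 [[i|f] v]; last rewrite (P2_edgeE f).
  by case: (ord2P i) => ->; case: (ord2P v) => ->.
by case: (ord2P v) => ->.
Qed.

(* Vertices of G are pairwise nonadjacent in Q(G), so Q(P_2) is the path 0 - e - 1
   and P_2 +_Q P_2 is a hexagon; [hexagon_succ] walks around it. *)
Definition hexagon_succ (x : vertex) : vertex :=
  let: (a, v) := x in
  match a with
  | inl i => if i == ord0 then (if v == ord0 then (inr P2_edge, v) else (inl i, ord0))
             else (if v == ord0 then (inl i, ord_max) else (inr P2_edge, v))
  | inr _ => if v == ord0 then (inl ord_max, v) else (inl ord0, v)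
  end.

Lemma Qprod22E x y : G x y = (y == hexagon_succ x) || (x == hexagon_succ y).
Proof.
by elim/vertex22_ind: x; elim/vertex22_ind: y; rewrite /Qprod /= ?xpair_eqE ?inE ?eqxx.
Qed.

Lemma hexagon_succ_no_2cycle x : hexagon_succ (hexagon_succ x) != x.
Proof. by elim/vertex22_ind: x. Qed.

Lemma hexagon_succ_orbit x : exists k, x = iter k hexagon_succ (inl ord0, ord0).
Proof.
by elim/vertex22_ind: x; [exists 0 | exists 5 | exists 2 | exists 3 | exists 1 | exists 4].
Qed.

Lemma hexagon_succ_inj : injective hexagon_succ.
Proof.
apply: (@can_inj _ _ _ (iter 5 hexagon_succ)) => x.
by rewrite -iterSr; elim/vertex22_ind: x.
Qed.

Lemma has_AT_orientation22 : has_AT_orientation G 2.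
Proof.
exists (successor_orientation hexagon_succ); split.
  exact: successor_orientationP Qprod22E hexagon_succ_no_2cycle.
split; last by move=> x; rewrite outdeg_successor_orientation.
apply: AT_successor_cycle hexagon_succ_inj hexagon_succ_orbit _.
by rewrite card_prod card_ord muln2 odd_double.
Qed.

End P2P2.

Theorem corollary3p9 (n m : nat) (hn : 2 <= n) (hm : 2 <= m) :
  AT_number (Qprod (Ppath n) (Ppath m))
            (if (n == 2) && (m == 2) then 2 else 3).
Proof.
case: ifP => [/andP[/eqP n2 /eqP m2] | not22]; apply: AT_numberP.
- by subst n m; exact: has_AT_orientation22.
- rewrite mul0n (bigD1 (inl (Ordinal hn), Ordinal hm)) //=.
  exact: leq_trans (ltnW (Qprod_deg_ge2 hn hm _)) (leq_addr _ _).
- exact: has_AT_orientation_Qpath.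
- rewrite /= mul1n; apply: sum_deg_gt; first exact: Qprod_deg_ge2.
  exact: Qprod_deg_ge3 hn hm (negbT not22).
Qed.
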